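(* Let $C$ be a binary linear $[n,k',d]$ code that contains its dual ($C^\perp\subseteq C$), and let the $[[n,k,d]]$ CSS code with $k=2k'-n$ be constructed from it. Then for every integer $c$ with $0\le c\le \frac{n-k}{2}=n-k'$ there is an $[[n-c,k,d;c]]_{AB}$ EAQEC code obtained from this CSS code by assigning $c$ of its qubits to Bob (deleting the corresponding columns of the $X$- and $Z$-parts of its check matrix).
   Context: CSS construction: if $C$ is a binary $[n,k',d]$ code with $C^\perp\subseteq C$ and parity check matrix $P$ (of size $(n-k')\times n$), the stabilizer group generated by the $X$-type operators $X^{r}$ and the $Z$-type operators $Z^{r}$ for the rows $r$ of $P$ defines an $[[n,2k'-n,d]]$ stabilizer code. Its check matrix can be brought to the standard form $\left[\begin{array}{cc|cc} A & I_{s\times s} & 0 & 0\\ 0&0&B& I_{(n-k-s)\times(n-k-s)}\end{array}\right]$. Pauli operators are considered up to phase; weight is the number of non-identity tensor factors. An $[[n',k,d;c]]$ entanglement-assisted (EAQEC) code: Alice and Bob share $c$ Bell pairs; Alice encodes $k$ qubits into $n'$ qubits (including her halves of the ebits). It is specified by a simplified stabilizer group $\mathcal S'$ on Alice's $n'$ qubits generated by $g'_1,h'_1,\dots,g'_c,h'_c,g'_{c+1},\dots,g'_{n'-k-c}$ with $g'_i,h'_i$ anticommuting for $i\le c$ and all other pairs commuting; the encoded state on all $n'+c$ qubits is stabilized by $g'_i\otimes Z_i$, $h'_i\otimes X_i$ ($i\le c$, acting on Bob's $i$-th qubit) and $g'_j\otimes I$ ($j>c$). Removing the columns of the last $c$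 qubits from a standard stabilizer code's check matrix whose corresponding generators are paired as $g'_i\otimes Z_i$, $h'_i\otimes X_i$ gives such a simplified group. The subscript $AB$ means the stabilizer group on all $n'+c$ qubits is that of a standard $[[n'+c,k,d]]$ stabilizer code, so the code corrects errors of weight up to $\lfloor (d-1)/2\rfloor$ on Alice's and Bob's qubits together. *)

From HB Require Import structures.
From mathcomp Require Import all_boot all_order all_algebra.
Set Implicit Arguments. Unset Strict Implicit. Unset Printing Implicit Defensive.
Import GRing.Theory.
Local Open Scope ring_scope.

Notation bvec n := 'rV['F_2]_n.

Definition hwt n (v : bvec n) : nat := #|[set i : 'I_n | v 0 i != 0]|.

Definition in_code m n (P : 'M['F_2]_(m, n)) (v : bvec n) : bool :=
  v *m P^T == 0.

Definition min_dist m n (P : 'M['F_2]_(m, n)) (d : nat) : Prop :=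
  (exists2 v : bvec n, in_code P v & (v != 0) && (hwt v == d)) /\
  (forall v : bvec n, in_code P v -> v != 0 -> (d <= hwt v)%N).

(* Pauli operators on n qubits, up to phase: (x | z) in F_2^(n+n);
   X-part = lsubmx, Z-part = rsubmx *)
Notation pauli n := 'rV['F_2]_(n + n).

Definition xpart n (v : pauli n) : bvec n := lsubmx v.
Definition zpart n (v : pauli n) : bvec n := rsubmx v.

(* weight = number of non-identity tensor factors *)
Definition pwt n (v : pauli n) : nat :=
  #|[set i : 'I_n | (xpart v 0 i != 0) || (zpart v 0 i != 0)]|.

(* symplectic product restricted to the qubits in A
   (0 = commute, 1 = anticommute, for the operators restricted to A,
    i.e. after deleting the columns of the qubits outside A) *)
Definition sympl_on n (A : {set 'I_n}) (u v : pauli n) : 'F_2 :=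
  \sum_(j in A) (xpart u 0 j * zpart v 0 j + zpart u 0 j * xpart v 0 j).

Definition sympl n (u v : pauli n) : 'F_2 := sympl_on [set: 'I_n] u v.

Definition css_check m n (P : 'M['F_2]_(m, n)) : 'M['F_2]_(m + m, n + n) :=
  block_mx P 0 0 P.

(* the stabilizer group with check matrix M (rows = generators) defines a
   standard [[n,k,d]] stabilizer code: the group is abelian, it has n-k
   independent generators, and every element of the normalizer N(S) outside S
   has weight at least d *)
Definition stab_code (n k d : nat) m (M : 'M['F_2]_(m, n + n)) : Prop :=
  [/\ (k <= n)%N,
      forall i j, sympl (row i M) (row j M) = 0,
      \rank M = (n - k)%N &
      forall v : pauli n, (forall i, sympl v (row i M) = 0) ->
        ~~ (v <= M)%MS -> (d <= pwt v)%N].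
Arguments stab_code n k d {m} M.

(* [[n - c, k, d; c]]_AB entanglement-assisted code obtained from the standard
   stabilizer code with check matrix M by assigning the c qubits
   bob 0, ..., bob (c-1) to Bob: generators g_i = g'_i (x) Z_i, h_i = h'_i (x) X_i
   (i < c) and f_l = f'_l (x) I (l < n-k-2c) generate the same group as M,
   are independent, and the simplified group (columns of Bob's qubits deleted)
   has the pairing structure g'_i, h'_i anticommuting, all other pairs commuting. *)
Definition EAQEC_AB_from (n k d c : nat) m (M : 'M['F_2]_(m, n + n)) : Prop :=
  exists bob : 'I_c -> 'I_n, injective bob /\
  let B := [set bob j | j : 'I_c] in
  let A := ~: B in
  exists (g h : 'I_c -> pauli n) (f : 'I_(n - k - 2 * c) -> pauli n),
  let G := col_mx (\matrix_i g i) (col_mx (\matrix_i h i) (\matrix_l f l)) in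
  [/\ stab_code n k d M,
      (G :=: M)%MS /\ row_free G,
      [/\ forall i j, xpart (g i) 0 (bob j) = 0 /\
                   zpart (g i) 0 (bob j) = (i == j)%:R,
          forall i j, xpart (h i) 0 (bob j) = (i == j)%:R /\
                   zpart (h i) 0 (bob j) = 0 &
          forall l j, xpart (f l) 0 (bob j) = 0 /\ zpart (f l) 0 (bob j) = 0] &
      [/\ forall i j, sympl_on A (g i) (h j) = (i == j)%:R,
          forall i j, sympl_on A (g i) (g j) = 0,
          forall i j, sympl_on A (h i) (h j) = 0,
          forall l i, sympl_on A (f l) (g i) = 0 /\ sympl_on A (f l) (h i) = 0 &
          forall l l', sympl_on A (f l) (f l') = 0]].
Arguments EAQEC_AB_from n k d c {m} M.

From HB Require Import structures.
From mathcomp Require Import all_boot all_order all_algebra.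
From mathcomp Require Import zify.
Set Implicit Arguments. Unset Strict Implicit.
Import GRing.Theory.
Local Open Scope ring_scope.

(* Bring the parity check matrix to systematic form Q = S P, with an identity
   block on pivot columns p. As Q Q^T = 0, rows i and j of Q are orthogonal; on
   the complement of the pivot columns of the first c rows their dot product is
   therefore 1 exactly when i = j < c. Handing those c pivot qubits to Bob, the
   Z- and X-type operators of the first c rows are the anticommuting pairs
   g_i, h_i (acting as Z_i, X_i on Bob's i-th qubit), while the X- and Z-type
   operators of the other rows vanish on Bob's qubits and commute with all
   generators on Alice's. Together they span the CSS stabilizer and are exactly
   n - k in number, hence independent. *)

Lemma systematic_form (F : fieldType) r n (P : 'M[F]_(r, n)) : row_free P ->
  exists2 p : 'I_r -> 'I_n, injective p &
  exists2 S : 'M[F]_r, S \in unitmx & forall i j, (S *m P) i (p j) = (i == j)%:R.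
Proof.
move=> freeP; have fullPT : row_full P^T by rewrite /row_full mxrank_tr.
set p := fullrankfun fullPT; exists p; first exact: fullrankfun_inj.
have unitPp : (rowsub p P^T)^T \in unitmx by rewrite unitmx_tr fullrowsub_unit.
exists (invmx (rowsub p P^T)^T); first by rewrite unitmx_inv.
move=> i j; have := congr1 (fun M : 'M_r => M i j) (mulVmx unitPp).
by rewrite !mxE => <-; apply: eq_bigr => k _; rewrite !mxE.
Qed.

Lemma self_orthogonal_rank (F : fieldType) m n (P : 'M[F]_(m, n)) :
  P *m P^T = 0 -> (\rank P + \rank P <= n)%N.
Proof.
by move=> PPT; have := mxrank_mul_min P P^T; rewrite PPT mxrank0 mxrank_tr leqn0 subn_eq0.
Qed.

Lemma submx_colL (F : fieldType) m1 m2 n (A : 'M[F]_(m1, n)) (B : 'M_(m2, n)) :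
  (A <= col_mx A B)%MS.
Proof. by rewrite -addsmxE addsmxSl. Qed.

Lemma submx_colR (F : fieldType) m1 m2 n (A : 'M[F]_(m1, n)) (B : 'M_(m2, n)) :
  (B <= col_mx A B)%MS.
Proof. by rewrite -addsmxE addsmxSr. Qed.

Definition dot_on (R : nzRingType) n (A : {set 'I_n}) (x y : 'rV[R]_n) : R :=
  \sum_(j in A) x 0 j * y 0 j.

Lemma dot_on0l (R : nzRingType) n (A : {set 'I_n}) (y : 'rV[R]_n) : dot_on A 0 y = 0.
Proof. by apply: big1 => j _; rewrite mxE mul0r. Qed.

Lemma dot_on0r (R : nzRingType) n (A : {set 'I_n}) (x : 'rV[R]_n) : dot_on A x 0 = 0.
Proof. by apply: big1 => j _; rewrite mxE mulr0. Qed.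

Lemma dot_on_rows (R : nzRingType) m n (M : 'M[R]_(m, n)) i j :
  dot_on [set: 'I_n] (row i M) (row j M) = (M *m M^T) i j.
Proof.
by rewrite /dot_on mxE; apply: eq_big => [k|k _]; rewrite ?inE // !mxE.
Qed.

Lemma dot_on_mul_tr (R : nzRingType) m n (x : 'rV[R]_n) (M : 'M[R]_(m, n)) i :
  dot_on [set: 'I_n] x (row i M) = (x *m M^T) 0 i.
Proof.
by rewrite /dot_on mxE; apply: eq_big => [k|k _]; rewrite ?inE // !mxE.
Qed.

Lemma dot_on_setC (R : nzRingType) n (A : {set 'I_n}) (x y : 'rV[R]_n) :
  dot_on (~: A) x y = dot_on [set: 'I_n] x y - dot_on A x y.
Proof.
by rewrite /dot_on (@big_setID _ _ _ _ [set: 'I_n] A) setTI setTD [X in X - _]addrC addrK.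
Qed.

(* The full Gram matrix vanishes, and its part on the pivot columns [p @: I]
   is the indicator of the diagonal of [I]. *)
Lemma dot_on_off_pivots (R : nzRingType) r n (Q : 'M[R]_(r, n)) (p : 'I_r -> 'I_n)
    (I : {set 'I_r}) i j :
  injective p -> Q *m Q^T = 0 -> (forall i j, Q i (p j) = (i == j)%:R) ->
  dot_on (~: (p @: I)) (row i Q) (row j Q) = - ((i == j) && (i \in I))%:R.
Proof.
move=> injp QQT Qp; rewrite dot_on_setC dot_on_rows QQT mxE add0r; congr (- _).
rewrite /dot_on big_imset /=; last by move=> ? ? _ _ /injp.
under eq_bigr => t _ do rewrite !mxE !Qp.
have [iI|iNI] := boolP (i \in I); last first.
  rewrite andbF big1 // => t tI.
  by rewrite (_ : i == t = false) ?mul0r //; apply: contraNF iNI => /eqP ->.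
rewrite andbT (bigD1 i) //= eqxx mul1r big1 ?addr0 1?eq_sym //.
by move=> t /andP[_ /negbTE]; rewrite eq_sym => ->; rewrite mul0r.
Qed.

Definition pauliX n (x : bvec n) : pauli n := row_mx x 0.
Definition pauliZ n (z : bvec n) : pauli n := row_mx 0 z.

Lemma sympl_on_row_mx n (A : {set 'I_n}) (x z x' z' : bvec n) :
  sympl_on A (row_mx x z) (row_mx x' z') = dot_on A x z' + dot_on A z x'.
Proof. by rewrite /sympl_on /xpart /zpart !row_mxKl !row_mxKr big_split. Qed.

Lemma sympl_on_XZ n (A : {set 'I_n}) (x z : bvec n) :
  sympl_on A (pauliX x) (pauliZ z) = dot_on A x z.
Proof. by rewrite sympl_on_row_mx dot_on0l addr0. Qed.

Lemma sympl_on_ZX n (A : {set 'I_n}) (z x : bvec n) :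
  sympl_on A (pauliZ z) (pauliX x) = dot_on A z x.
Proof. by rewrite sympl_on_row_mx dot_on0l add0r. Qed.

Lemma sympl_on_XX n (A : {set 'I_n}) (x x' : bvec n) :
  sympl_on A (pauliX x) (pauliX x') = 0.
Proof. by rewrite sympl_on_row_mx dot_on0r dot_on0l addr0. Qed.

Lemma sympl_on_ZZ n (A : {set 'I_n}) (z z' : bvec n) :
  sympl_on A (pauliZ z) (pauliZ z') = 0.
Proof. by rewrite sympl_on_row_mx dot_on0r dot_on0l addr0. Qed.

Lemma row_css_check m n (P : 'M['F_2]_(m, n)) i :
  row i (css_check P) =
    match split i with inl a => pauliX (row a P) | inr a => pauliZ (row a P) end.
Proof.
rewrite -[in LHS](splitK i) /css_check block_mxEv.
by case: (split i) => a /=; rewrite ?rowKu ?rowKd row_row_mx row0.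
Qed.

Lemma css_check_sub m1 m2 n (A : 'M['F_2]_(m1, n)) (B : 'M_(m2, n)) :
  (A <= B)%MS -> (css_check A <= css_check B)%MS.
Proof.
case/submxP=> D ->; rewrite /css_check.
have -> : block_mx (D *m B) 0 0 (D *m B) = block_mx D 0 0 D *m block_mx B 0 0 B.
  by rewrite mulmx_block !mulmx0 !mul0mx !addr0 !add0r.
exact: submxMl.
Qed.

Lemma rank_css_check m n (P : 'M['F_2]_(m, n)) :
  \rank (css_check P) = (\rank P + \rank P)%N.
Proof. exact: rank_diag_block_mx. Qed.

Lemma css_check_commute m n (P : 'M['F_2]_(m, n)) : P *m P^T = 0 ->
  forall i j, sympl (row i (css_check P)) (row j (css_check P)) = 0.
Proof.
move=> PPT i j; rewrite !row_css_check /sympl.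
have dotP a b : dot_on [set: 'I_n] (row a P) (row b P) = 0.
  by rewrite dot_on_rows PPT mxE.
by case: (split i) => a; case: (split j) => b;
  rewrite ?sympl_on_XX ?sympl_on_ZZ ?sympl_on_XZ ?sympl_on_ZX.
Qed.

Lemma css_normalizer m n (P : 'M['F_2]_(m, n)) (v : pauli n) :
  (forall i, sympl v (row i (css_check P)) = 0) ->
  in_code P (xpart v) /\ in_code P (zpart v).
Proof.
rewrite -[v]hsubmxK /sympl /in_code => Hv.
split; apply/eqP/rowP => a; rewrite [RHS]mxE -dot_on_mul_tr.
- have := Hv (rshift m a); rewrite row_css_check (unsplitK (inr a)) /=.
  by rewrite sympl_on_row_mx dot_on0r addr0 /xpart row_mxKl.
- have := Hv (lshift m a); rewrite row_css_check (unsplitK (inl a)) /=.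
  by rewrite sympl_on_row_mx dot_on0r add0r /zpart row_mxKr.
Qed.

Lemma row_mx_sub_css_check m n (P : 'M['F_2]_(m, n)) (x z : bvec n) :
  (x <= P)%MS -> (z <= P)%MS -> (row_mx x z <= css_check P)%MS.
Proof.
move=> /submxP[Dx ->] /submxP[Dz ->].
have -> : row_mx (Dx *m P) (Dz *m P) = row_mx (Dx *m P) 0 + row_mx 0 (Dz *m P).
  by rewrite add_row_mx addr0 add0r.
rewrite /css_check block_mxEv; apply: addmx_sub.
  rewrite -[0 : 'M_(1, n)](mulmx0 _ Dx) -mul_mx_row.
  exact: submx_trans (submxMl _ _) (submx_colL _ _).
rewrite -[0 : 'M_(1, n)](mulmx0 _ Dz) -mul_mx_row.
exact: submx_trans (submxMl _ _) (submx_colR _ _).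
Qed.

Lemma hwt_xpart n (v : pauli n) : (hwt (xpart v) <= pwt v)%N.
Proof. by apply: subset_leq_card; apply/subsetP => i; rewrite !inE => ->. Qed.

Lemma hwt_zpart n (v : pauli n) : (hwt (zpart v) <= pwt v)%N.
Proof. by apply: subset_leq_card; apply/subsetP => i; rewrite !inE orbC => ->. Qed.

Lemma light_codeword_sub m n d (P : 'M['F_2]_(m, n)) (x : bvec n) :
  min_dist P d -> in_code P x -> (hwt x < d)%N -> (x <= P)%MS.
Proof.
move=> [_ minP] Cx; apply: contraTT; rewrite -leqNgt => xNP.
by apply: minP Cx _; apply: contraNneq xNP => ->; rewrite sub0mx.
Qed.

Lemma css_stab_code m n d (P : 'M['F_2]_(m, n)) :
  row_free P -> min_dist P d -> P *m P^T = 0 ->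
  stab_code n (n - (m + m)) d (css_check P).
Proof.
move=> freeP minP PPT.
have mmn : (m + m <= n)%N by have := self_orthogonal_rank PPT; rewrite (eqP freeP).
split; first exact: leq_subr.
- exact: css_check_commute.
- by rewrite rank_css_check (eqP freeP) subKn.
move=> v Hv; rewrite leqNgt; apply: contra => light.
have [Cx Cz] := css_normalizer Hv.
rewrite -[v]hsubmxK; apply: row_mx_sub_css_check; apply: light_codeword_sub minP _ _ => //.
  exact: leq_ltn_trans (hwt_xpart v) light.
exact: leq_ltn_trans (hwt_zpart v) light.
Qed.

Lemma eqmx_row_free_of_sub (F : fieldType) m1 m2 n (A : 'M[F]_(m1, n)) (B : 'M[F]_(m2, n)) :
  (A <= B)%MS -> \rank A = m2 -> (B :=: A)%MS /\ row_free B.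
Proof.
move=> sAB rkA.
have rkB : \rank B = m2.
  by apply/eqP; rewrite eqn_leq rank_leq_row -{1}rkA (mxrank_leqif_sup sAB).
split; last by rewrite /row_free rkB.
by apply/eqmx_sym/eqmxP; rewrite -(geq_leqif (mxrank_leqif_eq sAB)) rkA rkB.
Qed.

Section EntanglementAssisted.

Variables (n c s N : nat) (Q : 'M['F_2]_(c + s, n)) (p : 'I_(c + s) -> 'I_n).
Hypotheses (injp : injective p) (QQT : Q *m Q^T = 0)
  (Qp : forall i j, Q i (p j) = (i == j)%:R) (HN : N = (s + s)%N).

Definition bob (t : 'I_c) : 'I_n := p (lshift s t).

Lemma bob_inj : injective bob.
Proof. exact: inj_comp injp (@lshift_inj c s). Qed.

Definition gen_g (i : 'I_c) : pauli n := pauliZ (row (lshift s i) Q).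
Definition gen_h (i : 'I_c) : pauli n := pauliX (row (lshift s i) Q).
Definition gen_f (l : 'I_N) : pauli n :=
  match split (cast_ord HN l) with
  | inl a => pauliX (row (rshift c a) Q)
  | inr a => pauliZ (row (rshift c a) Q)
  end.

Definition ea_gens : 'M['F_2]_(c + (c + N), n + n) :=
  col_mx (\matrix_i gen_g i) (col_mx (\matrix_i gen_h i) (\matrix_l gen_f l)).

Local Notation bob_rows := [set lshift s t | t : 'I_c].

Lemma lshift_bob_rows a : lshift s a \in bob_rows.
Proof. exact: imset_f. Qed.

Lemma rshift_bob_rowsF a : (rshift c a \in bob_rows) = false.
Proof. by apply/imsetP => -[t _ /eqP]; rewrite eq_rlshift. Qed.

Lemma alice_dot i j :
  dot_on (~: [set bob t | t : 'I_c]) (row i Q) (row j Q) =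
    ((i == j) && (i \in bob_rows))%:R.
Proof.
have -> : [set bob t | t : 'I_c] = p @: bob_rows by rewrite -imset_comp.
by rewrite dot_on_off_pivots // oppr_pchar2 // pchar_Fp.
Qed.

Lemma bob_action :
  [/\ forall i j, xpart (gen_g i) 0 (bob j) = 0 /\ zpart (gen_g i) 0 (bob j) = (i == j)%:R,
      forall i j, xpart (gen_h i) 0 (bob j) = (i == j)%:R /\ zpart (gen_h i) 0 (bob j) = 0 &
      forall l j, xpart (gen_f l) 0 (bob j) = 0 /\ zpart (gen_f l) 0 (bob j) = 0].
Proof.
rewrite /xpart /zpart; split=> [i j|i j|l j].
- by rewrite row_mxKl row_mxKr !mxE Qp eq_lshift.
- by rewrite row_mxKl row_mxKr !mxE Qp eq_lshift.
by rewrite /gen_f; case: split => a; rewrite row_mxKl row_mxKr !mxE Qp eq_rlshift.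
Qed.

Local Notation A := (~: [set bob t | t : 'I_c]).

Lemma alice_sympl :
  [/\ forall i j, sympl_on A (gen_g i) (gen_h j) = (i == j)%:R,
      forall i j, sympl_on A (gen_g i) (gen_g j) = 0,
      forall i j, sympl_on A (gen_h i) (gen_h j) = 0,
      forall l i, sympl_on A (gen_f l) (gen_g i) = 0 /\ sympl_on A (gen_f l) (gen_h i) = 0 &
      forall l l', sympl_on A (gen_f l) (gen_f l') = 0].
Proof.
split=> [i j|i j|i j|l i|l l'].
- by rewrite sympl_on_ZX alice_dot eq_lshift lshift_bob_rows andbT.
- exact: sympl_on_ZZ.
- exact: sympl_on_XX.
- rewrite /gen_f /gen_g /gen_h; case: split => a.
    by rewrite sympl_on_XX sympl_on_XZ alice_dot rshift_bob_rowsF andbF.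
  by rewrite sympl_on_ZZ sympl_on_ZX alice_dot rshift_bob_rowsF andbF.
rewrite /gen_f; case: split => a; case: split => b;
  by rewrite ?sympl_on_XX ?sympl_on_ZZ ?sympl_on_XZ ?sympl_on_ZX ?alice_dot
       ?rshift_bob_rowsF ?andbF.
Qed.

Lemma gen_g_sub i : (gen_g i <= ea_gens)%MS.
Proof. by rewrite -(rowK gen_g i); apply: submx_trans (row_sub _ _) (submx_colL _ _). Qed.

Lemma gen_h_sub i : (gen_h i <= ea_gens)%MS.
Proof.
rewrite -(rowK gen_h i); apply: submx_trans (row_sub _ _) _.
exact: submx_trans (submx_colL _ _) (submx_colR _ _).
Qed.

Lemma gen_f_sub l : (gen_f l <= ea_gens)%MS.
Proof.
rewrite -(rowK gen_f l); apply: submx_trans (row_sub _ _) _.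
exact: submx_trans (submx_colR _ _) (submx_colR _ _).
Qed.

Lemma css_check_sub_ea_gens : (css_check Q <= ea_gens)%MS.
Proof.
have gen_fE (a : 'I_(s + s)) : gen_f (cast_ord (esym HN) a) =
    match split a with
    | inl b => pauliX (row (rshift c b) Q)
    | inr b => pauliZ (row (rshift c b) Q)
    end.
  by rewrite /gen_f cast_ordKV.
apply/row_subP => i; rewrite row_css_check.
case: (split i) => a; rewrite -[a]splitK; case: (split a) => b /=.
- exact: gen_h_sub.
- by have := gen_f_sub (cast_ord (esym HN) (lshift s b)); rewrite gen_fE (unsplitK (inl b)).
- exact: gen_g_sub.
by have := gen_f_sub (cast_ord (esym HN) (rshift s b)); rewrite gen_fE (unsplitK (inr b)).
Qed.

End EntanglementAssisted.

Lemma css_eaqec_AB n k d c s (P : 'M['F_2]_(c + s, n)) :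
  row_free P -> P *m P^T = 0 -> stab_code n k d (css_check P) ->
  (n - k - 2 * c = s + s)%N -> EAQEC_AB_from n k d c (css_check P).
Proof.
move=> freeP PPT stabP HN.
have [p injp [S unitS Qp]] := systematic_form freeP.
have QQT : (S *m P) *m (S *m P)^T = 0.
  by rewrite trmx_mul mulmxA -(mulmxA S) PPT mulmx0 mul0mx.
exists (bob p); split; first exact: bob_inj.
exists (gen_g (S *m P)), (gen_h (S *m P)), (gen_f (S *m P) HN); split=> //.
- apply: eqmx_row_free_of_sub; last by rewrite rank_css_check (eqP freeP) HN; lia.
  have sPSP : (P <= S *m P)%MS by rewrite eqmxMfull // row_full_unit.
  exact: submx_trans (css_check_sub sPSP) (css_check_sub_ea_gens _ HN).
- exact: bob_action.
- exact: alice_sympl.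
Qed.

Theorem theorem2 (n k' d : nat) (P : 'M['F_2]_(n - k', n)) :
  (k' <= n)%N ->
  row_free P ->                 (* P is a full-rank parity check matrix: dim C = k' *)
  min_dist P d ->               (* C has minimum distance d *)
  P *m P^T = 0 ->               (* C^perp (row space of P) is contained in C *)
  forall c : nat, (c <= n - k')%N ->
    EAQEC_AB_from n (2 * k' - n) d c (css_check P).
Proof.
move=> k'n freeP minP PPT c cr.
have rkP := self_orthogonal_rank PPT; rewrite (eqP freeP) in rkP.
have -> : (2 * k' - n = n - ((n - k') + (n - k')))%N by lia.
have stabP := css_stab_code freeP minP PPT.
have HN : (n - (n - (n - k' + (n - k'))) - 2 * c = (n - k' - c) + (n - k' - c))%N.
  by lia.
have r_cs : (n - k' = c + (n - k' - c))%N by lia.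
move: (n - (n - k' + (n - k')))%N (n - k' - c)%N stabP HN r_cs => k s stabP HN.
move: (n - k')%N P freeP PPT stabP {minP} => r P freeP PPT stabP r_cs; subst r.
exact: css_eaqec_AB.
Qed.
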